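(* Let $m\ge 2$, $n\ge 1$, and let $\mathcal{A}\in\mathbb{S}_{m,n}$ be a tensor with all entries nonnegative. Suppose $\mathcal{A}=\mathcal{B}+\mathcal{C}$ with $\mathcal{B}=\sum_{k=1}^{r_1}(u^{(k)})^m$ and $\mathcal{C}=\sum_{j=1}^{r_2}(v^{(j)})^m$, where $u^{(k)}\in\mathbb{R}^n$ for all $k\in[r_1]$ and $v^{(j)}\in\mathbb{R}^n_+$ for all $j\in[r_2]$. If there exists an index $i_0\in[n]$ such that $u^{(k)}_{i_0}>0$ for all $k\in[r_1]$, then $\mathcal{A}$ is doubly nonnegative.
   Context: $[n]=\{1,\dots,n\}$. $\mathbb{T}_{m,n}$ is the space of real $m$th order $n$-dimensional tensors $\mathcal{A}=(a_{i_1\ldots i_m})$, $i_j\in[n]$, and $\mathbb{S}_{m,n}$ is the subspace of symmetric tensors (entries invariant under all permutations of the indices). For $x\in\mathbb{R}^n$, $x^m\in\mathbb{S}_{m,n}$ is the tensor with entries $(x^m)_{i_1\ldots i_m}=x_{i_1}\cdots x_{i_m}$. For $\mathcal{A}\in\mathbb{T}_{m,n}$, $\mathcal{A}x^{m-1}\in\mathbb{R}^n$ has entries $(\mathcal{A}x^{m-1})_i=\sum_{i_2,\dots,i_m\in[n]}a_{ii_2\ldots i_m}x_{i_2}\cdots x_{i_m}$, and $x^{[m-1]}\in\mathbb{R}^n$ has entries $x_i^{m-1}$. A real number $\lambda$ is an H-eigenvalue of $\mathcal{A}\in\mathbb{S}_{m,n}$ if there is $x\in\mathbb{R}^n\setminus\{0\}$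 with $\mathcal{A}x^{m-1}=\lambda x^{[m-1]}$. A tensor $\mathcal{A}\in\mathbb{S}_{m,n}$ is doubly nonnegative if all its entries are nonnegative and all its H-eigenvalues are nonnegative. *)

From HB Require Import structures.
From mathcomp Require Import all_boot all_order all_algebra all_fingroup.
Set Implicit Arguments. Unset Strict Implicit. Unset Printing Implicit Defensive.
Import Order.TTheory GRing.Theory Num.Theory.
Local Open Scope ring_scope.

(* Multi-indices (i_1,...,i_m) with i_j in [n], encoded as functions 'I_m -> 'I_n
   (position j of the index is f j; position 0 plays the role of i_1). *)
Definition tidx (m n : nat) := {ffun 'I_m -> 'I_n}.

Definition tensor (R : Type) (m n : nat) := tidx m n -> R.

Definition symmetric_tensor (R : Type) (m n : nat) (A : tensor R m n) : Prop :=
  forall (s : 'S_m) (f : tidx m n), A [ffun j => f (s j)] = A f.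

Definition tpow (R : realFieldType) (m n : nat) (x : 'I_n -> R) : tensor R m n :=
  fun f => \prod_(j < m) x (f j).

Definition tapply (R : realFieldType) (m n : nat) (A : tensor R m n)
    (x : 'I_n -> R) (i : 'I_n) : R :=
  \sum_(f : tidx m n | [forall j : 'I_m, (val j == 0)%N ==> (f j == i)])
     A f * \prod_(j : 'I_m | val j != 0%N) x (f j).

Definition H_eigenvalue (R : realFieldType) (m n : nat) (A : tensor R m n)
    (lambda : R) : Prop :=
  exists x : 'I_n -> R, (exists i, x i != 0) /\
    forall i, tapply A x i = lambda * x i ^+ (m - 1).

Definition doubly_nonnegative (R : realFieldType) (m n : nat) (A : tensor R m n) : Prop :=
  [/\ symmetric_tensor A,
      forall f, 0 <= A f
    & forall lambda, H_eigenvalue A lambda -> 0 <= lambda].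

(* For a sum of symmetric rank-one powers, (A x^{m-1})_i = sum_k u_ki (u_k.x)^{m-1} + sum_j v_ji (v_j.x)^{m-1}.
   If m is even, pairing the eigen-equation with x gives lambda * sum_i x_i^m = sum_k (u_k.x)^m + sum_j (v_j.x)^m >= 0.
   If m is odd, every (w.x)^{m-1} is nonnegative, so (A x^{m-1})_{i0} >= 0; when x_{i0} = 0 this coordinate vanishes,
   which forces u_k.x = 0 for all k (as u_{k i0} > 0), and then (A x^{m-1})_i >= 0 at every i, in particular at some
   i with x_i <> 0. Either way lambda * x_i^{m-1} >= 0 with x_i^{m-1} > 0. *)
From HB Require Import structures.
From mathcomp Require Import all_boot all_order all_algebra all_fingroup.
Set Implicit Arguments. Unset Strict Implicit. Unset Printing Implicit Defensive.
Import Order.TTheory GRing.Theory Num.Theory.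
Local Open Scope ring_scope.

Section TensorApply.
Variables (R : realFieldType) (m n : nat).
Implicit Types (A B : tensor R m n) (w x : 'I_n -> R).

Definition dotv w x : R := \sum_l w l * x l.

Lemma eq_tapply A B x i : A =1 B -> tapply A x i = tapply B x i.
Proof. by move=> eqAB; apply: eq_bigr => f _; rewrite eqAB. Qed.

Lemma tapplyD A B x i :
  tapply (fun f => A f + B f) x i = tapply A x i + tapply B x i.
Proof. by rewrite /tapply -big_split; apply: eq_bigr => f _; rewrite mulrDl. Qed.

Lemma tapply_sum (I : finType) (T : I -> tensor R m n) x i :
  tapply (fun f => \sum_k T k f) x i = \sum_k tapply (T k) x i.
Proof.
rewrite /tapply exchange_big /=.
by apply: eq_bigr => f _; rewrite mulr_suml.
Qed.

(* Both sides are the expansion of a product of sums over 'I_m: the factor at position 0 is pinned to i. *)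
Lemma tapply_tpow w x i : (0 < m)%N ->
  tapply (tpow (m:=m) w) x i = w i * dotv w x ^+ (m - 1).
Proof.
case: m => // m' _.
pose Q (j : 'I_m'.+1) (l : 'I_n) := (val j == 0)%N ==> (l == i).
pose G (j : 'I_m'.+1) (l : 'I_n) := w l * (if val j != 0%N then x l else 1).
rewrite /tapply (eq_bigr (fun f : tidx m'.+1 n => \prod_j G j (f j))); last first.
  move=> f _; rewrite /tpow [X in _ * X]big_mkcond -big_split /=.
  by apply: eq_bigr => j _; rewrite /G; case: ifP.
rewrite (eq_bigl (fun f : tidx m'.+1 n => f \in family Q)); last first.
  by move=> f; apply/forallP/familyP => Qf j; have := Qf j.
rewrite -(bigA_distr_big_dep Q G) big_ord_recl subn1 /=.
congr (_ * _); first by rewrite (big_pred1 i) /G /= ?mulr1.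
rewrite -[in RHS](card_ord m') -prodr_const; apply: eq_bigr => j _.
by apply: eq_big => [l|l _]; rewrite /Q /G.
Qed.

Lemma dotv_tapply_sum (I : finType) (T : I -> tensor R m n) x :
  dotv x (tapply (fun f => \sum_k T k f) x) = \sum_k dotv x (tapply (T k) x).
Proof.
rewrite /dotv exchange_big /=; apply: eq_bigr => l _.
by rewrite tapply_sum mulr_sumr.
Qed.

Lemma dotv_tapply_tpow w x : (0 < m)%N ->
  dotv x (tapply (tpow (m:=m) w) x) = dotv w x ^+ m.
Proof.
move=> m_gt0; rewrite {2}/dotv -{3}(subnK m_gt0) addn1 exprS mulr_suml.
by apply: eq_bigr => l _; rewrite tapply_tpow // mulrA (mulrC (x l)).
Qed.

Lemma dotv_eigenvector A x lam : (0 < m)%N ->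
  (forall i, tapply A x i = lam * x i ^+ (m - 1)) ->
  dotv x (tapply A x) = lam * \sum_i x i ^+ m.
Proof.
move=> m_gt0 eig; rewrite mulr_sumr; apply: eq_bigr => i _.
by rewrite eig -{2}(subnK m_gt0) addn1 exprS mulrCA.
Qed.

Lemma H_eigenvalue_ge0_of_dotv_ge0 A lam x i : (0 < m)%N -> ~~ odd m ->
  x i != 0 -> (forall i, tapply A x i = lam * x i ^+ (m - 1)) ->
  0 <= dotv x (tapply A x) -> 0 <= lam.
Proof.
move=> m_gt0 m_even xi_neq0 eig.
have pow_pos : 0 < \sum_l x l ^+ m.
  rewrite (bigD1 i) //=; apply: (@lt_le_trans _ _ (x i ^+ m)).
    by rewrite exprn_even_gt0 // xi_neq0 orbT.
  by rewrite lerDl; apply: sumr_ge0 => l _; apply: exprn_even_ge0.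
by rewrite (dotv_eigenvector m_gt0 eig) pmulr_lge0.
Qed.

Lemma H_eigenvalue_ge0_of_tapply_ge0 A lam x i : ~~ odd (m - 1) ->
  x i != 0 -> (forall i, tapply A x i = lam * x i ^+ (m - 1)) ->
  0 <= tapply A x i -> 0 <= lam.
Proof.
move=> m1_even xi_neq0 eig.
have pow_pos : 0 < x i ^+ (m - 1) by rewrite exprn_even_gt0 // xi_neq0 orbT.
by rewrite eig pmulr_lge0.
Qed.

End TensorApply.

Section SumOfPowers.
Variables (R : realFieldType) (m n r1 r2 : nat).
Variables (u : 'I_r1 -> 'I_n -> R) (v : 'I_r2 -> 'I_n -> R) (A : tensor R m n).
Hypothesis m_gt1 : (1 < m)%N.
Hypothesis A_def :
  forall f, A f = \sum_(k < r1) tpow (m:=m) (u k) f + \sum_(j < r2) tpow (m:=m) (v j) f.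

Let m_gt0 : (0 < m)%N. Proof. exact: ltnW. Qed.

Lemma tapply_sum_tpow x i : tapply A x i =
  \sum_k u k i * dotv (u k) x ^+ (m - 1) + \sum_j v j i * dotv (v j) x ^+ (m - 1).
Proof.
rewrite (eq_tapply _ _ A_def) tapplyD !tapply_sum.
by congr (_ + _); apply: eq_bigr => k _; rewrite tapply_tpow.
Qed.

Lemma dotv_tapply_sum_tpow x : dotv x (tapply A x) =
  \sum_k dotv (u k) x ^+ m + \sum_j dotv (v j) x ^+ m.
Proof.
rewrite -!(eq_bigr _ (fun k _ => dotv_tapply_tpow _ x m_gt0)) -!dotv_tapply_sum.
rewrite -big_split /=; apply: eq_bigr => l _.
by rewrite -mulrDr -tapplyD (eq_tapply _ _ A_def).
Qed.

Lemma H_eigenvalue_sum_tpow_ge0_even lam : ~~ odd m -> H_eigenvalue A lam -> 0 <= lam.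
Proof.
move=> m_even [x [[i xi_neq0] eig]].
apply: (H_eigenvalue_ge0_of_dotv_ge0 m_gt0 m_even xi_neq0 eig).
rewrite dotv_tapply_sum_tpow.
by apply: addr_ge0; apply: sumr_ge0 => k _; apply: exprn_even_ge0.
Qed.

Lemma H_eigenvalue_sum_tpow_ge0_odd (i0 : 'I_n) lam :
  odd m -> (forall j i, 0 <= v j i) -> (forall k, 0 < u k i0) ->
  H_eigenvalue A lam -> 0 <= lam.
Proof.
move=> m_odd v_ge0 u_pos [x [[i1 xi1_neq0] eig]].
have m1_even : ~~ odd (m - 1) by move: m_odd; rewrite -{1}(subnK m_gt0) addn1.
have u_term_ge0 k : 0 <= u k i0 * dotv (u k) x ^+ (m - 1).
  by apply: mulr_ge0; [exact: ltW | exact: exprn_even_ge0].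
have v_terms_ge0 i : 0 <= \sum_j v j i * dotv (v j) x ^+ (m - 1).
  by apply: sumr_ge0 => j _; apply: mulr_ge0; [exact: v_ge0 | exact: exprn_even_ge0].
have [xi0_eq0 | xi0_neq0] := eqVneq (x i0) 0; last first.
  apply: (H_eigenvalue_ge0_of_tapply_ge0 m1_even xi0_neq0 eig).
  by rewrite tapply_sum_tpow addr_ge0 // sumr_ge0.
have u_orth k : dotv (u k) x ^+ (m - 1) = 0.
  have : tapply A x i0 = 0.
    by rewrite eig xi0_eq0 expr0n subn_eq0 leqNgt m_gt1 mulr0.
  rewrite tapply_sum_tpow => /eqP.
  rewrite (paddr_eq0 (sumr_ge0 _ (fun k _ => u_term_ge0 k)) (v_terms_ge0 i0)).
  case/andP=> /eqP /(psumr_eq0P (fun k _ => u_term_ge0 k)) u_zero _.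
  by have /eqP := u_zero k isT; rewrite mulf_eq0 (negbTE (lt0r_neq0 (u_pos k))) => /eqP.
apply: (H_eigenvalue_ge0_of_tapply_ge0 m1_even xi1_neq0 eig).
by rewrite tapply_sum_tpow big1 ?add0r // => k _; rewrite u_orth mulr0.
Qed.

End SumOfPowers.

Theorem mainTheorem1 (R : rcfType) (m n r1 r2 : nat) (hm : (2 <= m)%N) (hn : (1 <= n)%N)
    (A : tensor R m n) (u : 'I_r1 -> 'I_n -> R) (v : 'I_r2 -> 'I_n -> R) :
  symmetric_tensor A ->
  (forall f, 0 <= A f) ->
  (forall f, A f = \sum_(k < r1) @tpow R m n (u k) f + \sum_(j < r2) @tpow R m n (v j) f) ->
  (forall j i, 0 <= v j i) ->
  (exists i0 : 'I_n, forall k, 0 < u k i0) ->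
  doubly_nonnegative A.
Proof.
move=> A_sym A_ge0 A_def v_ge0 [i0 u_pos]; split=> // lam.
have [m_odd | m_even] := boolP (odd m).
- exact: (H_eigenvalue_sum_tpow_ge0_odd hm A_def m_odd v_ge0 u_pos).
- exact: (H_eigenvalue_sum_tpow_ge0_even hm A_def m_even).
Qed.
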